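(* Let $f\in\Delta(\mathcal{G},\le)$ and $1\le\alpha\le\beta$. If $f_\alpha\in\Delta(\mathcal{A},\le)$, then $f_\beta\in\Delta(\mathcal{A},\le)$. Consequently, for each $f\in\Delta(\mathcal{G},\le)$ the set of admissible exponents is either empty or an interval of $[1,\infty)$ unbounded from above.
   Context: Graphs are finite simple undirected; $x\simeq x'$ means equal or adjacent. Strong product $G\boxtimes H$: vertex set $V(G)\times V(H)$, $(g,h)\simeq(g',h')$ iff $g\simeq g'$ and $h\simeq h'$. $\sqcup$ is disjoint union. $H\le G$ for graphs means there is a homomorphism from the complement of $H$ to the complement of $G$. $\Delta(\mathcal{G},\le)$ is the set of maps $f$ from (isomorphism classes of) graphs to $\mathbb{R}_{\ge0}$ with $f(\text{empty graph})=0$, $f(K_1)=1$, $f(G\sqcup H)=f(G)+f(H)$, $f(G\boxtimes H)=f(G)f(H)$, and $H\le G\Rightarrow f(H)\le f(G)$. A noncommutative graph is a subspace $S\subseteq B(\mathcal{H})$ ($\mathcal{H}$ finite-dimensional complex Hilbert space) with $I\in S$, $S^*=S$; isomorphism is unitary conjugation. A cohomomorphism from $T\subseteq B(\mathcal{K})$ to $S\subseteq B(\mathcal{H})$ is a finite family of linear maps $E_i:\mathcal{K}\to\mathcal{H}$ with $\sum_iE_i^*E_i=I$ and $E_i^*SE_j\subseteq T$ for all $i,j$; write $T\le S$ if one exists. Tensor product and direct sum are $\operatorname{span}\{A\otimes B\}$ and $\{A\oplus B\}$. For a graph $G$, $\widehat{G}=\operatorname{span}\{|x\rangle\langle x'|:x\simeq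 x'\}\subseteq B(\mathbb{C}^{V(G)})$; $\mathcal{C}_d=\mathbb{C}I\subseteq B(\mathbb{C}^d)$. $\mathcal{A}$ is the semiring (under $\oplus,\otimes$, up to isomorphism) generated by all $\widehat{G}$ and all $\mathcal{C}_d$; every element has the form $\bigoplus_{d=1}^r\widehat{G_d}\otimes\mathcal{C}_d$. For $f\in\Delta(\mathcal{G},\le)$ and $\alpha\ge1$, $f_\alpha:\mathcal{A}\to\mathbb{R}_{\ge0}$ is the semiring homomorphism $f_\alpha(\bigoplus_{d=1}^r\widehat{G_d}\otimes\mathcal{C}_d)=\sum_{d=1}^r f(G_d)d^\alpha$. $\Delta(\mathcal{A},\le)$ is the set of $\le$-monotone semiring homomorphisms $\mathcal{A}\to\mathbb{R}_{\ge0}$. An exponent $\alpha\ge1$ is admissible for $f$ if $f_\alpha\in\Delta(\mathcal{A},\le)$. *)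

From HB Require Import structures.
From mathcomp Require Import all_boot all_order all_algebra.
From mathcomp Require Import complex mxtens.
From mathcomp Require Import reals exp Rstruct.

Set Implicit Arguments.
Unset Strict Implicit.
Unset Printing Implicit Defensive.

Import Order.TTheory GRing.Theory Num.Theory.
Local Open Scope ring_scope.

Notation RR := Rdefinitions.R.
Notation CC := (RR[i]).

Record graph := Graph {
  gV : finType;
  gadj : rel gV;
  gadj_sym : symmetric gadj;
  gadj_irr : irreflexive gadj }.
Arguments gadj : clear implicits.

Definition simeq (G : graph) (x y : gV G) : bool := (x == y) || gadj G x y.

Definition emptyG : graph :=
  @Graph void (fun _ _ => false) (fun _ _ => erefl) (fun _ => erefl).

Definition K1 : graph :=
  @Graph unit (fun _ _ => false) (fun _ _ => erefl) (fun _ => erefl).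

Definition dunion_adj (G H : graph) (u v : (gV G + gV H)%type) : bool :=
  match u, v with
  | inl x, inl y => gadj G x y
  | inr x, inr y => gadj H x y
  | _, _ => false
  end.

Lemma dunion_adj_sym G H : symmetric (@dunion_adj G H).
Proof. by case=> x [] y //=; rewrite gadj_sym. Qed.

Lemma dunion_adj_irr G H : irreflexive (@dunion_adj G H).
Proof. by case=> x /=; rewrite gadj_irr. Qed.

Definition dunion (G H : graph) : graph :=
  @Graph (gV G + gV H)%type (@dunion_adj G H)
    (@dunion_adj_sym G H) (@dunion_adj_irr G H).

Definition sprod_adj (G H : graph) (u v : (gV G * gV H)%type) : bool :=
  (u != v) && simeq u.1 v.1 && simeq u.2 v.2.

Lemma simeq_sym (G : graph) (x y : gV G) : @simeq G x y = @simeq G y x.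
Proof. by rewrite /simeq eq_sym gadj_sym. Qed.

Lemma sprod_adj_sym G H : symmetric (@sprod_adj G H).
Proof. by move=> u v; rewrite /sprod_adj eq_sym (@simeq_sym G) [simeq u.2 _](@simeq_sym H). Qed.

Lemma sprod_adj_irr G H : irreflexive (@sprod_adj G H).
Proof. by move=> u; rewrite /sprod_adj eqxx. Qed.

Definition sprod (G H : graph) : graph :=
  @Graph (gV G * gV H)%type (@sprod_adj G H)
    (@sprod_adj_sym G H) (@sprod_adj_irr G H).

(** H ≤ G : there is a homomorphism from the complement of H to the
    complement of G.  In the complement, x and y are adjacent iff they are
    neither equal nor adjacent, i.e. iff ~~ simeq x y. *)
Definition graph_le (H G : graph) : Prop :=
  exists phi : gV H -> gV G,
    forall x y, ~~ simeq x y -> ~~ simeq (phi x) (phi y).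

(** Δ(G, ≤) : maps from graphs to R_{>=0} (monotonicity forces invariance
    under isomorphism, so these are maps on isomorphism classes). *)
Definition inDeltaG (f : graph -> RR) : Prop :=
  (forall G, 0 <= f G) /\
  f emptyG = 0 /\ f K1 = 1 /\
  (forall G H, f (dunion G H) = f G + f H) /\
  (forall G H, f (sprod G H) = f G * f H) /\
  (forall G H, graph_le H G -> f H <= f G).

(** A subspace S of B(C^n) = 'M[CC]_n, encoded (as in mxalgebra) as the row
    space of a matrix whose rows are mxvec-encodings of matrices. *)
Record ncgraph := NCGraph {
  ndim : nat;
  nsp : 'M[CC]_(ndim * ndim) }.

Definition adjmx (m n : nat) (A : 'M[CC]_(m, n)) : 'M[CC]_(n, m) :=
  (map_mx Num.conj A)^T.

Definition cohom (T S : ncgraph) : Prop :=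
  exists (N : nat) (E : 'I_N -> 'M[CC]_(ndim S, ndim T)),
    \sum_(i < N) adjmx (E i) *m E i = 1%:M /\
    forall (i j : 'I_N) (X : 'M[CC]_(ndim S)),
      (X \in nsp S)%MS -> (adjmx (E i) *m X *m E j \in nsp T)%MS.

(** Ĝ = span { |x><x'| : x ≃ x' } ⊆ B(C^{V(G)}) (vertices indexed through
    enum_val). *)
Definition hatG (G : graph) : ncgraph :=
  @NCGraph #|gV G|
    (\sum_(i < #|gV G|) \sum_(j < #|gV G| | simeq (enum_val i) (enum_val j))
        <<mxvec (delta_mx i j : 'M[CC]_#|gV G|)>>)%MS.

Definition Cd (d : nat) : ncgraph :=
  @NCGraph d (<<mxvec (1%:M : 'M[CC]_d)>>)%MS.

Definition ncdsum (S T : ncgraph) : ncgraph :=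
  @NCGraph (ndim S + ndim T)
    ((\sum_(k < ndim S * ndim S)
        <<mxvec (block_mx (vec_mx (row k (nsp S))) 0 0
                   (0 : 'M[CC]_(ndim T)))>>)
     + (\sum_(k < ndim T * ndim T)
        <<mxvec (block_mx (0 : 'M[CC]_(ndim S)) 0 0
                   (vec_mx (row k (nsp T))))>>))%MS.

Definition nctens (S T : ncgraph) : ncgraph :=
  @NCGraph (ndim S * ndim T)
    (\sum_(k < ndim S * ndim S) \sum_(l < ndim T * ndim T)
        <<mxvec (vec_mx (row k (nsp S)) *t vec_mx (row l (nsp T)))>>)%MS.

Definition nczero : ncgraph := @NCGraph 0 0.

(** Elements of the semiring A are represented by a list
    [:: G_1; ...; G_r] of graphs, standing for ⊕_{d=1}^r Ĝ_d ⊗ C_d. *)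
Fixpoint arep_from (d : nat) (s : seq graph) : ncgraph :=
  match s with
  | [::] => nczero
  | G :: s' => ncdsum (nctens (hatG G) (Cd d)) (arep_from d.+1 s')
  end.

Definition arep (s : seq graph) : ncgraph := arep_from 1 s.

Definition f_alpha (f : graph -> RR) (alpha : RR) (s : seq graph) : RR :=
  \sum_(d < size s) f (nth emptyG s d) * powR (d.+1)%:R alpha.

(** f_α ∈ Δ(A, ≤).  f_α is (by construction, given f ∈ Δ(G,≤)) a semiring
    homomorphism A -> R_{>=0}; membership in Δ(A,≤) is its
    ≤-monotonicity: T ≤ S (a cohomomorphism from T to S exists) implies
    f_α(T) <= f_α(S), for all elements S, T of A. *)
Definition f_alpha_in_DeltaA (f : graph -> RR) (alpha : RR) : Prop :=
  forall s t : seq graph, cohom (arep t) (arep s) ->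
    f_alpha f alpha t <= f_alpha f alpha s.

Definition admissible (f : graph -> RR) (alpha : RR) : Prop :=
  1 <= alpha /\ f_alpha_in_DeltaA f alpha.

(* Writing d^beta = d^alpha * d^(beta - alpha) and d^(beta - alpha) as the
   telescoping sum of the nonnegative increments (m+1)^(beta - alpha) - m^(beta - alpha),
   m < d, expresses f_beta(T) as a nonnegative combination of the values f_alpha(T_m),
   where T_m is T with its first m summands Ĝ_d ⊗ C_d replaced by the zero space.
   It remains to see that a cohomomorphism T -> S induces cohomomorphisms T_m -> S_m,
   i.e. that the first summands can be peeled off: if (E_i) is a cohomomorphism from
   Ĝ ⊗ C_d ⊕ T' to Ĥ ⊗ C_d ⊕ S', the block b_i of E_i from the space of T' to that
   of Ĥ ⊗ C_d vanishes, since b_i^* (|y><y| ⊗ I_d) b_i has rank at most d and lies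
   in T', whose nonzero elements all have rank greater than d.  The lower right blocks of the E_i then
   form a cohomomorphism T' -> S'. *)

From HB Require Import structures.
From mathcomp Require Import all_boot all_order all_algebra.
From mathcomp Require Import complex mxtens.
From mathcomp Require Import reals exp Rstruct.
From Stdlib Require Import Classical.
Import Order.TTheory GRing.Theory Num.Theory.
Local Open Scope ring_scope.

Set Implicit Arguments.
Unset Strict Implicit.
Unset Printing Implicit Defensive.

Section LinearImage.
Variables (F : fieldType) (m1 n1 m2 n2 : nat) (f : 'M[F]_(m1, n1) -> 'M[F]_(m2, n2)).
Hypothesis linf : linear f.

Lemma mul_vec_linear A : mxvec A *m lin_mx f = mxvec (f A).
Proof. exact: (mul_vec_lin (HB.pack f (GRing.isLinear.Build _ _ _ _ f linf))). Qed.

Lemma mxvec_linear_sub p q (V : 'M_(p, m1 * n1)) (W : 'M_(q, m2 * n2)) X :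
  (V *m lin_mx f <= W)%MS -> (mxvec X <= V)%MS -> (mxvec (f X) <= W)%MS.
Proof. by move=> VfW XV; rewrite -mul_vec_linear (submx_trans (submxMr _ XV)). Qed.

Lemma rows_lin_mx_sub p q (V : 'M_(p, m1 * n1)) (W : 'M_(q, m2 * n2)) :
  (forall i, mxvec (f (vec_mx (row i V))) <= W)%MS -> (V *m lin_mx f <= W)%MS.
Proof.
by move=> fVW; apply/row_subP => i; rewrite row_mul -[row i V]vec_mxK mul_vec_linear.
Qed.

Lemma sumsmx_lin_mx_sub (I : finType) (P : pred I) (B : I -> 'M_(m1, n1))
    q (W : 'M_(q, m2 * n2)) :
  (forall i, P i -> (mxvec (f (B i)) <= W)%MS) ->
  ((\sum_(i | P i) <<mxvec (B i)>>)%MS *m lin_mx f <= W)%MS.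
Proof.
move=> fBW; rewrite (sumsmxMr_gen P _ (lin_mx f)); apply/sumsmx_subP => i Pi.
by rewrite genmxE (eqmxMr _ (genmxE _)) mul_vec_linear fBW.
Qed.

End LinearImage.

Lemma tensmx_linearl (R : pzRingType) m n p q (B : 'M[R]_(p, q)) :
  linear (fun A : 'M[R]_(m, n) => A *t B).
Proof. by move=> a A A'; apply/matrixP=> i j; rewrite !mxE mulrDl mulrA. Qed.

Lemma tensmx_linearr (R : comPzRingType) m n p q (A : 'M[R]_(m, n)) :
  linear (fun B : 'M[R]_(p, q) => A *t B).
Proof. by move=> a B B'; apply/matrixP=> i j; rewrite !mxE mulrDr mulrCA. Qed.

Lemma tensmxZl (R : pzRingType) m n p q c (A : 'M[R]_(m, n)) (B : 'M[R]_(p, q)) :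
  (c *: A) *t B = c *: (A *t B).
Proof. by apply/matrixP=> i j; rewrite !mxE mulrA. Qed.

Lemma tensmxZr (R : comPzRingType) m n p q c (A : 'M[R]_(m, n)) (B : 'M[R]_(p, q)) :
  A *t (c *: B) = c *: (A *t B).
Proof. by apply/matrixP=> i j; rewrite !mxE mulrCA. Qed.

Lemma tensmx_suml (R : pzRingType) (I : Type) (r : seq I) (P : pred I) m n p q
    (A : I -> 'M[R]_(m, n)) (B : 'M[R]_(p, q)) :
  (\sum_(i <- r | P i) A i) *t B = \sum_(i <- r | P i) A i *t B.
Proof.
by apply/matrixP=> x z; rewrite mxE !summxE mulr_suml; apply: eq_bigr => i _; rewrite mxE.
Qed.

Lemma tensmx11 (R : pzRingType) m n :
  (1%:M : 'M[R]_m) *t (1%:M : 'M[R]_n) = 1%:M.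
Proof.
apply/matrixP=> i j; case: (mxtens_indexP i) => i0 i1; case: (mxtens_indexP j) => j0 j1.
by rewrite tensmxE !mxE (inj_eq (can_inj (@mxtens_indexK _ _))) xpair_eqE -natrM mulnb.
Qed.

Lemma summx_block_dr (V : nmodType) (I : Type) (r : seq I) (P : pred I) m1 m2 n1 n2
    (F : I -> 'M[V]_(m2, n2)) :
  \sum_(i <- r | P i) block_mx (0 : 'M_(m1, n1)) 0 0 (F i) =
  block_mx 0 0 0 (\sum_(i <- r | P i) F i).
Proof.
elim/big_rec2: _ => [|i A B _ ->]; first by rewrite block_mx0.
by rewrite add_block_mx !addr0.
Qed.

Lemma mxrankM_maxlr (F : fieldType) m n p q (A : 'M[F]_(m, n)) (X : 'M_(n, p))
    (B : 'M_(p, q)) :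
  (\rank (A *m X *m B) <= \rank X)%N.
Proof. exact: leq_trans (mxrankM_maxl _ _) (mxrankM_maxr _ _). Qed.

Lemma mxrank_ulsubmx (F : fieldType) m1 m2 n1 n2 (X : 'M[F]_(m1 + m2, n1 + n2)) :
  (\rank (ulsubmx X) <= \rank X)%N.
Proof.
suff -> : ulsubmx X = row_mx 1%:M 0 *m X *m col_mx 1%:M 0 by apply: mxrankM_maxlr.
rewrite -{2}[X]submxK mul_row_block mul_row_col.
by rewrite !mul1mx !mul0mx !addr0 mulmx1 mulmx0 addr0.
Qed.

Lemma mxrank_drsubmx (F : fieldType) m1 m2 n1 n2 (X : 'M[F]_(m1 + m2, n1 + n2)) :
  (\rank (drsubmx X) <= \rank X)%N.
Proof.
suff -> : drsubmx X = row_mx 0 1%:M *m X *m col_mx 0 1%:M by apply: mxrankM_maxlr.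
rewrite -{2}[X]submxK mul_row_block mul_row_col.
by rewrite !mul1mx !mul0mx !add0r mulmx1 mulmx0 add0r.
Qed.

Lemma mxrank_tensmx1 (F : fieldType) m k (A : 'M[F]_m) :
  A != 0 -> (k <= \rank (A *t (1%:M : 'M[F]_k)))%N.
Proof.
case/matrix0Pn => i [j Aij].
pose P := (delta_mx 0 i : 'M[F]_(1, m)) *t (1%:M : 'M[F]_k).
pose Q := (delta_mx j 0 : 'M[F]_(m, 1)) *t (1%:M : 'M[F]_k).
have PAQ : P *m (A *t 1%:M) *m Q = A i j *: 1%:M.
  rewrite !tensmx_mul !mulmx1 -rowE -colE [col _ _]mx11_scalar !mxE -scalemx1.
  by rewrite tensmxZl tensmx11.
rewrite -[X in (X <= _)%N]mul1n -(mxrank1 F (1 * k)) -(mxrank_scale_nz _ Aij).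
by rewrite -PAQ mxrankM_maxlr.
Qed.

Lemma adjmxM m n p (A : 'M[CC]_(m, n)) (B : 'M[CC]_(n, p)) :
  adjmx (A *m B) = adjmx B *m adjmx A.
Proof. by rewrite /adjmx map_mxM trmx_mul. Qed.

Lemma adjmx0 m n : adjmx (0 : 'M[CC]_(m, n)) = 0.
Proof. by apply/matrixP=> i j; rewrite !mxE rmorph0. Qed.

Lemma adjmx_block m1 m2 n1 n2 (A : 'M[CC]_(m1, n1)) (B : 'M_(m1, n2))
    (C : 'M_(m2, n1)) (D : 'M_(m2, n2)) :
  adjmx (block_mx A B C D) = block_mx (adjmx A) (adjmx C) (adjmx B) (adjmx D).
Proof. by rewrite /adjmx map_block_mx tr_block_mx. Qed.

Lemma adjmx_mul_eq0 m n (M : 'M[CC]_(m, n)) : adjmx M *m M = 0 -> M = 0.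
Proof.
move=> /matrixP MM0; apply/matrixP => i j; have /eqP := MM0 j j.
rewrite !mxE psumr_eq0 => [/allP/(_ i)|k _]; rewrite ?mem_index_enum !mxE mulrC -normCK.
  by rewrite sqrf_eq0 normr_eq0 => /(_ isT)/eqP.
exact: exprn_ge0.
Qed.

Lemma drsubmx_adj_block m1 m2 n1 n2 (E F : 'M[CC]_(m1 + m2, n1 + n2)) X1 X2 :
  drsubmx (adjmx E *m block_mx X1 0 0 X2 *m F) =
  adjmx (ursubmx E) *m X1 *m ursubmx F + adjmx (drsubmx E) *m X2 *m drsubmx F.
Proof.
rewrite -[E]submxK -[F]submxK adjmx_block !mulmx_block !block_mxKdr !block_mxKur.
by rewrite !mulmx0 !addr0 add0r.
Qed.

Lemma mem0_nsp (S : ncgraph) : (mxvec (0 : 'M[CC]_(ndim S)) <= nsp S)%MS.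
Proof. by rewrite linear0 sub0mx. Qed.

Section DirectSum.
Variables S T : ncgraph.
Local Notation p := (ndim S).
Local Notation q := (ndim T).

Lemma ncdsum_linear_sub m n (f : 'M[CC]_(p + q) -> 'M[CC]_(m, n)) r (W : 'M_(r, m * n)) X :
  linear f ->
  (forall k, mxvec (f (block_mx (vec_mx (row k (nsp S))) 0 0 0)) <= W)%MS ->
  (forall k, mxvec (f (block_mx 0 0 0 (vec_mx (row k (nsp T))))) <= W)%MS ->
  (mxvec X <= nsp (ncdsum S T))%MS -> (mxvec (f X) <= W)%MS.
Proof.
move=> linf fS fT; apply: (mxvec_linear_sub linf).
by rewrite addsmxMr addsmx_sub !sumsmx_lin_mx_sub.
Qed.

Lemma block_mx_mem_ncdsum (A : 'M[CC]_p) (B : 'M[CC]_q) :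
  (mxvec A <= nsp S)%MS -> (mxvec B <= nsp T)%MS ->
  (mxvec (block_mx A 0 0 B) <= nsp (ncdsum S T))%MS.
Proof.
have linl : linear (fun A : 'M[CC]_p => block_mx A 0 0 (0 : 'M_q)).
  by move=> a A1 A2; rewrite scale_block_mx add_block_mx !scaler0 !addr0.
have linr : linear (fun B : 'M[CC]_q => block_mx (0 : 'M_p) 0 0 B).
  by move=> a B1 B2; rewrite scale_block_mx add_block_mx !scaler0 !addr0.
move=> AS BT.
have -> : block_mx A 0 0 B = block_mx A 0 0 0 + block_mx 0 0 0 B.
  by rewrite add_block_mx !addr0 add0r.
rewrite linearD addmx_sub //.
  apply: (mxvec_linear_sub linl _ AS); apply: (rows_lin_mx_sub linl) => k.
  by rewrite /=; apply: submx_trans (addsmxSl _ _); rewrite (sumsmx_sup k) ?genmxE.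
apply: (mxvec_linear_sub linr _ BT); apply: (rows_lin_mx_sub linr) => k.
by rewrite /=; apply: submx_trans (addsmxSr _ _); rewrite (sumsmx_sup k) ?genmxE.
Qed.

Lemma mem_ncdsum (X : 'M[CC]_(p + q)) :
  (mxvec X <= nsp (ncdsum S T))%MS =
  [&& (mxvec (ulsubmx X) <= nsp S)%MS, (mxvec (drsubmx X) <= nsp T)%MS,
      ursubmx X == 0 & dlsubmx X == 0].
Proof.
apply/idP/and4P => [XST | [XS XT /eqP ur0 /eqP dl0]]; last first.
  by rewrite -[X]submxK ur0 dl0 block_mx_mem_ncdsum.
have lin_ul : linear (@ulsubmx CC p q p q) by move=> a A B; rewrite /ulsubmx !linearP.
have lin_dr : linear (@drsubmx CC p q p q) by move=> a A B; rewrite /drsubmx !linearP.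
have lin_ur : linear (@ursubmx CC p q p q) by move=> a A B; rewrite /ursubmx !linearP.
have lin_dl : linear (@dlsubmx CC p q p q) by move=> a A B; rewrite /dlsubmx !linearP.
rewrite -[ursubmx X == 0]mxvec_eq0 -[dlsubmx X == 0]mxvec_eq0 -!submx0; split.
- by apply: ncdsum_linear_sub lin_ul _ _ XST => k;
    rewrite ?block_mxKul ?vec_mxK ?row_sub ?linear0 ?sub0mx.
- by apply: ncdsum_linear_sub lin_dr _ _ XST => k;
    rewrite ?block_mxKdr ?vec_mxK ?row_sub ?linear0 ?sub0mx.
- by apply: ncdsum_linear_sub lin_ur _ _ XST => k; rewrite block_mxKur linear0 sub0mx.
- by apply: ncdsum_linear_sub lin_dl _ _ XST => k; rewrite block_mxKdl linear0 sub0mx.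
Qed.

End DirectSum.

Section TensorProduct.
Variables S T : ncgraph.

Lemma tensmx_mem_nctens (A : 'M[CC]_(ndim S)) (B : 'M[CC]_(ndim T)) :
  (mxvec A <= nsp S)%MS -> (mxvec B <= nsp T)%MS ->
  (mxvec (A *t B) <= nsp (nctens S T))%MS.
Proof.
move=> AS BT; apply: (mxvec_linear_sub (tensmx_linearl B) _ AS).
apply: (rows_lin_mx_sub (tensmx_linearl B)) => k.
apply: (mxvec_linear_sub (tensmx_linearr _) _ BT).
apply: (rows_lin_mx_sub (tensmx_linearr _)) => l.
by rewrite /= (sumsmx_sup k) // (sumsmx_sup l) ?genmxE.
Qed.

Lemma mem_nctens_Cd k (X : 'M[CC]_(ndim S * k)) :
  (mxvec X <= nsp (nctens S (Cd k)))%MS ->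
  exists A : 'M[CC]_(ndim S), X = A *t 1%:M.
Proof.
have lin_tens1 := tensmx_linearl (m := ndim S) (n := ndim S) (1%:M : 'M[CC]_k).
suff SCk : (nsp (nctens S (Cd k)) <= lin_mx (fun A => A *t 1%:M))%MS.
  move=> XS; have /submxP[u] := submx_trans XS SCk.
  rewrite -[u]vec_mxK mul_vec_linear // => /(can_inj mxvecK) ->.
  by exists (vec_mx u).
apply/sumsmx_subP => a _; apply/sumsmx_subP => b _; rewrite genmxE.
have /sub_rVP[c ->] : (row b <<mxvec (1%:M : 'M[CC]_k)>>%MS <= mxvec 1%:M)%MS.
  by rewrite (submx_trans (row_sub _ _)) ?genmxE.
by rewrite linearZ /= mxvecK tensmxZr -tensmxZl -(mul_vec_linear lin_tens1) submxMl.
Qed.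

End TensorProduct.

Lemma delta_mx_mem_hatG (G : graph) (y : 'I_(ndim (hatG G))) :
  (mxvec (delta_mx y y : 'M[CC]_(ndim (hatG G))) <= nsp (hatG G))%MS.
Proof. by rewrite (sumsmx_sup y) // (sumsmx_sup y) ?genmxE // /simeq eqxx. Qed.

Lemma scalar1_mem_Cd d : (mxvec (1%:M : 'M[CC]_d) <= nsp (Cd d))%MS.
Proof. by rewrite genmxE. Qed.

Lemma mem_arep_from_rank_eq0 k t (X : 'M[CC]_(ndim (arep_from k t))) :
  (mxvec X <= nsp (arep_from k t))%MS -> (\rank X < k)%N -> X = 0.
Proof.
elim: t k X => [|G t IHt] k X; first by move=> _ _; apply/matrixP => -[].
change 'M[CC]_(ndim (nctens (hatG G) (Cd k)) + ndim (arep_from k.+1 t)) in X.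
rewrite mem_ncdsum => /and4P[/mem_nctens_Cd[A ulXE] Xdr /eqP ur0 /eqP dl0] rkX.
have dr0 : drsubmx X = 0.
  by apply: IHt Xdr _; rewrite (leq_ltn_trans (mxrank_drsubmx X)) // ltnW.
have ul0 : ulsubmx X = 0.
  have [A0 | /(mxrank_tensmx1 k) rkA] := eqVneq A 0; first by rewrite ulXE A0 tens0mx.
  by move: rkX; rewrite -ulXE in rkA; rewrite ltnNge (leq_trans rkA (mxrank_ulsubmx X)).
by rewrite -[X]submxK ul0 ur0 dl0 dr0 block_mx0.
Qed.

(** * Peeling off the first summand of a cohomomorphism *)

Definition is_cohom (T S : ncgraph) N (E : 'I_N -> 'M[CC]_(ndim S, ndim T)) : Prop :=
  \sum_(i < N) adjmx (E i) *m E i = 1%:M /\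
  forall i j (X : 'M[CC]_(ndim S)),
    (mxvec X <= nsp S)%MS -> (mxvec (adjmx (E i) *m X *m E j) <= nsp T)%MS.
Arguments is_cohom T S {N} E.

Lemma cohom_ncdsumr T1 T2 S1 S2 N
    (E : 'I_N -> 'M[CC]_(ndim S1 + ndim S2, ndim T1 + ndim T2)) :
  is_cohom (ncdsum T1 T2) (ncdsum S1 S2) E -> (forall i, ursubmx (E i) = 0) ->
  cohom T2 S2.
Proof.
move=> [sumE memE] ur0; exists N, (fun i => drsubmx (E i)); split => [|i j X XS2].
  have drE i : drsubmx (adjmx (E i) *m E i) = adjmx (drsubmx (E i)) *m drsubmx (E i).
    rewrite -[adjmx (E i)]mulmx1 (scalar_mx_block (ndim S1) (ndim S2)).
    by rewrite drsubmx_adj_block ur0 adjmx0 !mul0mx add0r mulmx1.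
  have := congr1 drsubmx sumE.
  rewrite (scalar_mx_block (ndim T1) (ndim T2)) block_mxKdr => <-.
  by rewrite -(eq_bigr _ (fun i _ => drE i)) /drsubmx !linear_sum.
have := memE i j _ (block_mx_mem_ncdsum (mem0_nsp S1) XS2).
by rewrite mem_ncdsum drsubmx_adj_block ur0 adjmx0 !mul0mx add0r => /and4P[].
Qed.

Definition slice_mx n d (y : 'I_n) : 'M[CC]_(1 * d, n * d) := delta_mx 0 y *t 1%:M.

Lemma adj_slice_mx_mul n d (y : 'I_n) :
  adjmx (slice_mx d y) *m slice_mx d y = delta_mx y y *t 1%:M.
Proof.
have -> : adjmx (slice_mx d y) = delta_mx y 0 *t 1%:M.
  apply/matrixP=> r c; rewrite !mxE rmorphM !rmorph_nat andbC.
  by congr (_ * _); rewrite eq_sym.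
by rewrite tensmx_mul mul_delta_mx mulmx1.
Qed.

Lemma sum_adj_slice_mx n d :
  \sum_(y < n) adjmx (slice_mx d y) *m slice_mx d y = 1%:M.
Proof.
rewrite -tensmx11 mx1_sum_delta tensmx_suml.
by apply: eq_bigr => y _; rewrite adj_slice_mx_mul.
Qed.

Lemma cohom_arep_ursubmx_eq0 d H t T1 S2 N
    (E : 'I_N -> 'M[CC]_(ndim (nctens (hatG H) (Cd d)) + ndim S2,
                          ndim T1 + ndim (arep_from d.+1 t))) :
  is_cohom (ncdsum T1 (arep_from d.+1 t)) (ncdsum (nctens (hatG H) (Cd d)) S2) E ->
  forall i, ursubmx (E i) = 0.
Proof.
move=> [_ memE] i; set b := ursubmx (E i).
have slice_b0 y : slice_mx d y *m b = 0.
  apply: adjmx_mul_eq0; apply: (mem_arep_from_rank_eq0 (k := d.+1) (t := t)); last first.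
    by rewrite ltnS -[d in (_ <= d)%N]mul1n (leq_trans (mxrankM_maxr _ _) (rank_leq_row _)).
  have ZH : (mxvec (adjmx (slice_mx d y) *m slice_mx d y) <= nsp (nctens (hatG H) (Cd d)))%MS.
    by rewrite adj_slice_mx_mul tensmx_mem_nctens ?delta_mx_mem_hatG ?scalar1_mem_Cd.
  have := memE i i _ (block_mx_mem_ncdsum ZH (mem0_nsp S2)).
  rewrite mem_ncdsum drsubmx_adj_block mulmx0 mul0mx addr0 => /and4P[_ + _ _].
  by rewrite adjmxM !mulmxA.
rewrite -[b]mul1mx -(sum_adj_slice_mx _ d) mulmx_suml big1 // => y _.
by rewrite -mulmxA slice_b0 mulmx0.
Qed.

Lemma cohom_arep_from_behead d G H t s :
  cohom (arep_from d (G :: t)) (arep_from d (H :: s)) ->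
  cohom (arep_from d.+1 t) (arep_from d.+1 s).
Proof.
case=> N [E cohE]; apply: (cohom_ncdsumr cohE).
exact: (cohom_arep_ursubmx_eq0 cohE).
Qed.

Lemma cohom_ndim0 T S : ndim T = 0%N -> cohom T S.
Proof.
case: T => [[|//] nspT] _; exists 1%N, (fun _ => 0).
by split=> [|i j X _]; rewrite ?mulmx0 ?linear0 ?sub0mx // [LHS]flatmx0 [RHS]flatmx0.
Qed.

Lemma cohom_nczero T : cohom T nczero -> ndim T = 0%N.
Proof.
case: T => [[//|n] nspT] [N [E [sumE _]]].
have := congr1 (fun M : 'M[CC]_n.+1 => M 0 0) sumE.
rewrite /= big1 => [|i _]; last by rewrite [E i]flatmx0 mulmx0.
by rewrite !mxE eqxx => /eqP; rewrite eq_sym oner_eq0.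
Qed.

Lemma cohom_ncdsum_ndim0l Z T S :
  ndim Z = 0%N -> cohom T S -> cohom (ncdsum Z T) (ncdsum Z S).
Proof.
case: Z => [[|//] nspZ] _ [N [E [sumE memE]]].
exists N, (fun i => block_mx 0 0 0 (E i)); split => [|i j X].
  under eq_bigr do rewrite adjmx_block !adjmx0 mulmx_block !mulmx0 !mul0mx !addr0 add0r.
  rewrite summx_block_dr sumE [RHS](scalar_mx_block 0).
  by congr block_mx; rewrite [RHS]flatmx0.
rewrite !mem_ncdsum => /and4P[_ XS /eqP urX0 /eqP dlX0].
rewrite -[X]submxK urX0 dlX0 drsubmx_adj_block block_mxKur !block_mxKdr adjmx0.
by rewrite !mul0mx add0r memE // !flatmx0 [dlsubmx _]thinmx0 linear0 sub0mx !eqxx.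
Qed.

Fixpoint clear_prefix (m : nat) (t : seq graph) : seq graph :=
  match m, t with
  | m'.+1, _ :: t' => emptyG :: clear_prefix m' t'
  | _, _ => t
  end.

Lemma ndim_arep_clear_prefix m d t :
  (ndim (arep_from d (clear_prefix m t)) <= ndim (arep_from d t))%N.
Proof. by elim: t m d => [|G t IHt] [|m] d //=; rewrite leq_add // card_void. Qed.

Lemma cohom_clear_prefix m d t s :
  cohom (arep_from d t) (arep_from d s) ->
  cohom (arep_from d (clear_prefix m t)) (arep_from d (clear_prefix m s)).
Proof.
elim: m d t s => [|m IHm] d [|G t] [|H s] // cohts; first exact: cohom_ndim0.
  apply: cohom_ndim0; apply/eqP; rewrite -leqn0 -(cohom_nczero cohts).
  exact: ndim_arep_clear_prefix m.+1 d (G :: t).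
apply: cohom_ncdsum_ndim0l; first by rewrite /= card_void.
exact: IHm (cohom_arep_from_behead cohts).
Qed.

(** * Abel summation in the exponent *)

Lemma size_clear_prefix m t : size (clear_prefix m t) = size t.
Proof. by elim: t m => [|G t IHt] [|m] //=; rewrite IHt. Qed.

Lemma nth_clear_prefix m t i :
  nth emptyG (clear_prefix m t) i = if (i < m)%N then emptyG else nth emptyG t i.
Proof.
elim: t m i => [|G t IHt] [|m] [|i] //=; first by case: ifP.
exact: IHt.
Qed.

Lemma f_alpha_clear_prefix (f : graph -> RR) a m t : f emptyG = 0 ->
  f_alpha f a (clear_prefix m t) =
  \sum_(i < size t | (m <= i)%N) f (nth emptyG t i) * powR i.+1%:R a.
Proof.
move=> f0; rewrite /f_alpha size_clear_prefix [RHS]big_mkcond; apply: eq_bigr => i _.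
by rewrite nth_clear_prefix ltnNge; case: (m <= i)%N; rewrite ?f0 ?mul0r.
Qed.

(* [powR 0 0 = 1]; the convention [0 ^ g = 0] makes the increments below
   telescope to [(i + 1) ^ g] for every [g], including [g = 0]. *)
Definition powRn (g : RR) (j : nat) : RR := if j is 0 then 0 else powR j%:R g.

Definition powR_incr (g : RR) (m : nat) : RR := powRn g m.+1 - powRn g m.

Lemma powR_incr_ge0 g m : 0 <= g -> 0 <= powR_incr g m.
Proof.
move=> g0; rewrite subr_ge0; case: m => [|m] /=; first exact: powR_ge0.
by rewrite ge0_ler_powR ?nnegrE ?ler0n ?ler_nat.
Qed.

Lemma sum_powR_incr g i K : (i < K)%N ->
  \sum_(m < K | (m <= i)%N) powR_incr g m = powR i.+1%:R g.
Proof.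
move=> iK; rewrite -(big_mkord (fun m => m <= i)%N).
rewrite (eq_bigl (fun m => true && (m < i.+1))%N) // -big_nat_widen //.
by rewrite telescope_sumr // subr0.
Qed.

Lemma f_alpha_abel (f : graph -> RR) a b t K : f emptyG = 0 -> (size t <= K)%N ->
  f_alpha f b t = \sum_(m < K) powR_incr (b - a) m * f_alpha f a (clear_prefix m t).
Proof.
move=> f0 tK; under [RHS]eq_bigr do rewrite f_alpha_clear_prefix // mulr_sumr big_mkcond.
rewrite exchange_big; apply: eq_bigr => i _; rewrite -big_mkcond -mulr_suml /=.
rewrite sum_powR_incr ?(leq_trans (ltn_ord i) tK) // mulrCA -powRD ?subrK //.
by rewrite pnatr_eq0 implybT.
Qed.

Lemma f_alpha_in_DeltaA_le (f : graph -> RR) a b : f emptyG = 0 -> a <= b ->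
  f_alpha_in_DeltaA f a -> f_alpha_in_DeltaA f b.
Proof.
move=> f0 ab mono_a s t cohts.
rewrite (f_alpha_abel a _ f0 (leq_maxl (size t) (size s))).
rewrite (f_alpha_abel a _ f0 (leq_maxr (size t) (size s))).
apply: ler_sum => m _; apply: ler_wpM2l; first by rewrite powR_incr_ge0 // subr_ge0.
exact/mono_a/cohom_clear_prefix.
Qed.

Lemma admissible_le (f : graph -> RR) a b : f emptyG = 0 -> a <= b ->
  admissible f a -> admissible f b.
Proof.
move=> f0 ab [a1 mono_a]; split; first exact: le_trans ab.
exact: f_alpha_in_DeltaA_le mono_a.
Qed.

Theorem theorem3p4 (f : graph -> RR) :
  inDeltaG f ->
  (forall alpha beta : RR, 1 <= alpha -> alpha <= beta ->
     f_alpha_in_DeltaA f alpha -> f_alpha_in_DeltaA f beta) /\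
  ((forall alpha : RR, ~ admissible f alpha) \/
   [/\ (exists a : RR, admissible f a),
       (forall a b c : RR, admissible f a -> admissible f c ->
          a <= b -> b <= c -> admissible f b) &
       (forall M : RR, exists a : RR, M <= a /\ admissible f a)]).
Proof.
move=> [_ [f0 _]]; split=> [a b _ |]; first exact: f_alpha_in_DeltaA_le.
have [[a adm_a] | none] := classic (exists a, admissible f a); last first.
  by left=> a adm_a; apply: none; exists a.
right; split=> [|b c d adm_b _ bc _ | M]; first by exists a.
  exact: admissible_le f0 bc adm_b.
exists (Num.max M a); rewrite le_max lexx; split=> //.
by apply: admissible_le f0 _ adm_a; rewrite le_max lexx orbT.
Qed.
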